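(* Let $\mathcal{A},\mathcal{B}$ be symmetric real $m$-th order $n$-dimensional tensors ($n=n_1+\cdots+n_r$) with $\mathcal{A}$ strictly $\mathcal{K}$-positive, i.e. $\mathcal{A}x^m>0$ for all $x\in\mathcal{K}\setminus\{0\}$. Let $\bar x$ be a stationary point of the problem $$\max\ \lambda(x):=\frac{\mathcal{B}x^m}{\mathcal{A}x^m}\quad\text{s.t.}\quad (x^i_\circ)^2-\|x^i_\bullet\|^2\ge 0,\ x^i_\circ\ge 0\ (i=1,\ldots,r),\quad e^\top x=1.$$ Then $(\bar x,\lambda(\bar x))$ is a solution of the second-order cone tensor eigenvalue complementarity problem, i.e. $\bar x\neq0$, $\bar x\in\mathcal{K}$, $\bar w:=(\lambda(\bar x)\mathcal{A}-\mathcal{B})\bar x^{m-1}\in\mathcal{K}$ and $\langle\bar x,\bar w\rangle=0$.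
   Context: A real $m$-th order $n$-dimensional tensor is an array $\mathcal{A}=(a_{i_1\ldots i_m})$; it is symmetric if its entries are invariant under any permutation of the indices. For $x\in\mathbb{R}^n$, $\mathcal{A}x^{m-1}\in\mathbb{R}^n$ has $i$-th component $\sum_{i_2,\ldots,i_m} a_{ii_2\ldots i_m}x_{i_2}\cdots x_{i_m}$ and $\mathcal{A}x^m=\sum_{i_1,\ldots,i_m} a_{i_1\ldots i_m}x_{i_1}\cdots x_{i_m}$. Vectors are written $x=(x^1,\ldots,x^r)\in\mathbb{R}^{n_1}\times\cdots\times\mathbb{R}^{n_r}$ with $x^i=(x^i_\circ,x^i_\bullet)\in\mathbb{R}\times\mathbb{R}^{n_i-1}$. $\mathcal{K}=\mathcal{K}^{n_1}\times\cdots\times\mathcal{K}^{n_r}$ with $\mathcal{K}^{n_i}=\{x^i: x^i_\circ\ge\|x^i_\bullet\|\}$. $e=(e^1,\ldots,e^r)$ with $e^i=(1,0,\ldots,0)^\top\in\mathbb{R}^{n_i}$. A stationary point of the maximization problem is a feasible point $\bar x$ satisfying the KKT conditions: there exist $\beta,\gamma\in\mathbb{R}^r_+$ and $\delta\in\mathbb{R}$ with $\nabla\lambda(\bar x)+\sum_i\beta_i\nabla g_i(\bar x)+\sum_i\gamma_i\nabla h_i(\bar x)+\delta e=0$, $\beta_i g_i(\bar x)=0$, $\gamma_i h_i(\bar x)=0$, where $g_i(x)=(x^i_\circ)^2-\|x^i_\bullet\|^2$ and $h_i(x)=x^i_\circ$. *)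

From HB Require Import structures.
From mathcomp Require Import all_boot all_order all_algebra all_fingroup.
From mathcomp Require Import all_classical all_reals all_analysis.
Set Implicit Arguments. Unset Strict Implicit. Unset Printing Implicit Defensive.
Import Order.TTheory GRing.Theory Num.Theory.
Local Open Scope ring_scope.

Section Defs.
Variable R : realType.
Variables (r : nat) (nn : 'I_r -> nat).

(* Coordinate index set of R^{n_1} x ... x R^{n_r}: pairs (block i, position j < n_i).
   Position 0 of block i is x^i_o, the others form x^i_bullet. *)
Definition Idx := {i : 'I_r & 'I_(nn i)}.

Definition vec := Idx -> R.

Definition tensor (m : nat) := {ffun 'I_m -> Idx} -> R.

Definition symmetric_tensor m (A : tensor m) : Prop :=
  forall (s : 'S_m) (idx : {ffun 'I_m -> Idx}), A [ffun k => idx (s k)] = A idx.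

Definition tens_m m (A : tensor m) (x : vec) : R :=
  \sum_(idx : {ffun 'I_m -> Idx}) A idx * \prod_(k : 'I_m) x (idx k).

Definition tens_m1 m (A : tensor m) (x : vec) : vec := fun i =>
  \sum_(idx : {ffun 'I_m -> Idx} | [forall k : 'I_m, (val k == 0%N) ==> (idx k == i)])
     A idx * \prod_(k : 'I_m | val k != 0%N) x (idx k).

(* x^i_o (the unique coordinate of block i with position 0, when n_i >= 1) *)
Definition xcirc (x : vec) (i : 'I_r) : R :=
  \sum_(j : 'I_(nn i) | val j == 0%N) x (Tagged (fun i => 'I_(nn i)) j).

Definition xbullet2 (x : vec) (i : 'I_r) : R :=
  \sum_(j : 'I_(nn i) | val j != 0%N) (x (Tagged (fun i => 'I_(nn i)) j)) ^+ 2.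

Definition inK (x : vec) : Prop := forall i, Num.sqrt (xbullet2 x i) <= xcirc x i.

Definition evec : vec := fun k => (val (tagged k) == 0%N)%:R.

Definition inner (x y : vec) : R := \sum_k x k * y k.

Definition zero_vec : vec := fun _ => 0.

Definition grad (f : vec -> R) (x : vec) : vec := fun k =>
  derive1 (fun t : R => f (fun l => x l + t * (l == k)%:R)) 0.

Definition lam m (A B : tensor m) (x : vec) : R := tens_m B x / tens_m A x.

Definition gcon (i : 'I_r) (x : vec) : R := xcirc x i ^+ 2 - xbullet2 x i.
Definition hcon (i : 'I_r) (x : vec) : R := xcirc x i.

Definition feasible (x : vec) : Prop :=
  (forall i, 0 <= gcon i x) /\ (forall i, 0 <= hcon i x) /\ inner evec x = 1.

Definition stationary m (A B : tensor m) (x : vec) : Prop :=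
  feasible x /\
  exists (beta gamma : 'I_r -> R) (delta : R),
    (forall i, 0 <= beta i) /\ (forall i, 0 <= gamma i) /\
    (forall k, grad (lam A B) x k + \sum_i beta i * grad (gcon i) x k
               + \sum_i gamma i * grad (hcon i) x k + delta * evec k = 0) /\
    (forall i, beta i * gcon i x = 0) /\ (forall i, gamma i * hcon i x = 0).

Definition strictly_K_positive m (A : tensor m) : Prop :=
  forall x, inK x -> x <> zero_vec -> 0 < tens_m A x.

End Defs.

From mathcomp Require Import all_boot all_order all_algebra all_fingroup.
From mathcomp Require Import all_classical all_reals all_analysis.
From mathcomp Require Import ring.
Import Order.TTheory GRing.Theory Num.Theory.
Set Implicit Arguments.
Unset Strict Implicit.
Unset Printing Implicit Defensive.
Local Open Scope ring_scope.

(* Euler's identity for symmetric tensors gives grad lam(x) = -(m / A x^m) w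
   with w = (lam(x) A - B) x^(m-1), and <x, w> = 0.  So the KKT equation reads
   w = (A x^m / m) (sum_i beta_i grad g_i + sum_i gamma_i grad h_i + delta e).
   Pairing with x, complementarity kills the beta and gamma terms and e^T x = 1
   leaves 0 = <x, w> = (A x^m / m) delta, hence delta = 0.  Block by block, w^i
   is then a nonnegative multiple of (2 beta_i x^i_o + gamma_i, -2 beta_i x^i_b),
   which lies in K^(n_i) because x^i does. *)

Section RealDerivatives.
Variable R : realType.
Implicit Types (c d x v : R).

Lemma scalerRE c d : c *: d = c * d.
Proof. by []. Qed.

Lemma is_derive_big (I : Type) (s : seq I) (P : pred I) (F : I -> R -> R)
    (dF : I -> R) x v :
  (forall i, P i -> is_derive x v (F i) (dF i)) ->
  is_derive x v (fun t => \sum_(i <- s | P i) F i t) (\sum_(i <- s | P i) dF i).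
Proof.
move=> dF_F; elim: s => [|a s IH].
  rewrite big_nil (_ : (fun _ => _) = cst 0); first exact: is_derive_cst.
  by apply/funext => t; rewrite big_nil.
rewrite big_cons; case: ifP => Pa.
  rewrite (_ : (fun _ => _) = F a + (fun t => \sum_(i <- s | P i) F i t)).
    exact: is_deriveD (dF_F a Pa) IH.
  by apply/funext => t; rewrite big_cons Pa.
by rewrite (_ : (fun _ => _) = (fun t => \sum_(i <- s | P i) F i t)) //;
  apply/funext => t; rewrite big_cons Pa.
Qed.

Lemma is_derive_bigprod (I : eqType) (s : seq I) (F : I -> R -> R) (dF : I -> R)
    x v :
  uniq s -> (forall i, is_derive x v (F i) (dF i)) ->
  is_derive x v (fun t => \prod_(i <- s) F i t)
    (\sum_(j <- s) dF j * \prod_(l <- s | l != j) F l x).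
Proof.
move=> + dF_F; elim: s => [_|a s IH /= /andP[aNs s_uniq]].
  rewrite big_nil (_ : (fun _ => _) = cst 1); first exact: is_derive_cst.
  by apply/funext => t; rewrite big_nil.
rewrite (_ : (fun _ => _) = F a * (fun t => \prod_(i <- s) F i t)); last first.
  by apply/funext => t; rewrite big_cons.
apply: is_derive_eq; first exact: is_deriveM (dF_F a) (IH s_uniq).
have other_factors : \prod_(l <- s | l != a) F l x = \prod_(l <- s) F l x.
  rewrite -big_filter (_ : seq.filter _ s = s) //.
  by apply/all_filterP/allP => l ls; apply: contraNneq aNs => <-.
rewrite big_cons /= big_cons eqxx /= other_factors addrC !scalerRE.
congr (_ + _); first by rewrite mulrC.
rewrite big_distrr /=; apply: eq_big_seq => j js.
by rewrite big_cons ifT 1?mulrCA //; apply: contraNneq aNs => ->.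
Qed.

Lemma is_derive_affine c d x : is_derive x 1 (fun t => c + t * d) d.
Proof.
rewrite (_ : (fun _ => _) = cst c + id * cst d); last by apply/funext.
apply: is_derive_eq.
by rewrite scaler0 !add0r scalerRE mulr1.
Qed.

Lemma is_derive_mull c (f : R -> R) x v df :
  is_derive x v f df -> is_derive x v (fun t => c * f t) (c * df).
Proof.
move=> f_df; rewrite (_ : (fun _ => _) = c *: f); last by apply/funext.
exact: is_deriveZ.
Qed.

Lemma is_derive_sqr (f : R -> R) x df :
  is_derive x 1 f df -> is_derive x 1 (fun t => f t ^+ 2) (2 * f x * df).
Proof.
move=> f_df; rewrite (_ : (fun _ => _) = f ^+ 2); last first.
  by apply/funext => t; rewrite exprfctE.
by apply: is_derive_eq; rewrite scalerRE expr1.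
Qed.

End RealDerivatives.

Section BlockVectors.
Variables (R : realType) (r : nat) (nn : 'I_r -> nat).
Local Notation V := (vec R nn).
Local Notation Tg := (Tagged (fun i : 'I_r => 'I_(nn i))).

Lemma big_Idx (F : Idx nn -> R) :
  \sum_k F k = \sum_i \sum_(j : 'I_(nn i)) F (Tg j).
Proof. by rewrite sig_big_dep; apply: eq_bigr => -[i j]. Qed.

Lemma sum_Tagged_eq i (P : pred 'I_(nn i)) (c : 'I_(nn i) -> R) (j : 'I_(nn i)) :
  \sum_(j' | P j') c j' * (Tg j' == Tg j)%:R = (P j)%:R * c j.
Proof.
under eq_bigr do rewrite eq_Tagged /=.
rewrite big_mkcond (bigD1 j) //= eqxx mulr1 big1 ?addr0; last first.
  by move=> j' /negbTE ->; rewrite mulr0 if_same.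
by case: (P j); rewrite ?mul1r ?mul0r.
Qed.

Lemma sum_Tagged_neq i i' (P : pred 'I_(nn i)) (c : 'I_(nn i) -> R)
    (j : 'I_(nn i')) :
  i != i' -> \sum_(j' | P j') c j' * (Tg j' == Tg j)%:R = 0.
Proof.
move=> neq_ii'; rewrite big1 // => j' _.
case: eqP => [/(congr1 tag) /= eq_ii'|_]; last by rewrite mulr0.
by rewrite eq_ii' eqxx in neq_ii'.
Qed.

Lemma xcirc_head (x : V) i (ni_gt0 : (0 < nn i)%N) :
  xcirc x i = x (Tg (Ordinal ni_gt0)).
Proof. by rewrite /xcirc (big_pred1 (Ordinal ni_gt0)) // => j; rewrite -val_eqE. Qed.

Lemma inner_scale (x v : V) (c : R) : inner x (fun k => c * v k) = c * inner x v.
Proof. by rewrite /inner mulr_sumr; apply: eq_bigr => k _; rewrite mulrCA. Qed.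

Lemma inner_eq1_neq0 (y x : V) : inner y x = 1 -> x <> (fun _ => 0).
Proof.
move=> yx1 x0; move: yx1; rewrite x0 /inner big1 => [/esym/eqP|k _].
  by rewrite oner_eq0.
by rewrite mulr0.
Qed.

Lemma inner_evec (x : V) : inner (evec R (nn:=nn)) x = \sum_i xcirc x i.
Proof.
rewrite /inner big_Idx; apply: eq_bigr => i _; rewrite /xcirc [RHS]big_mkcond.
by apply: eq_bigr => j _; rewrite /evec /=; case: (_ == _); rewrite ?mul1r ?mul0r.
Qed.

Lemma inK_gcon_hcon (x : V) :
  (forall i, 0 <= gcon i x) -> (forall i, 0 <= hcon i x) -> inK x.
Proof.
move=> g_ge0 h_ge0 i; have := g_ge0 i; have := h_ge0 i; rewrite /gcon /hcon.
move=> xc_ge0; rewrite subr_ge0 => le_bullet.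
by rewrite -(ger0_norm xc_ge0) -sqrtr_sqr ler_wsqrtr.
Qed.

Lemma inK_scale (c : R) (v : V) : 0 <= c -> inK v -> inK (fun k => c * v k).
Proof.
move=> c_ge0 Kv i; rewrite /xcirc /xbullet2 -mulr_sumr.
under eq_bigr do rewrite exprMn.
rewrite -mulr_sumr sqrtrM ?sqr_ge0 // sqrtr_sqr ger0_norm //.
by rewrite ler_wpM2l //; exact: Kv.
Qed.

End BlockVectors.

Section Gradients.
Variables (R : realType) (r : nat) (nn : 'I_r -> nat).
Local Notation V := (vec R nn).
Local Notation Tg := (Tagged (fun i : 'I_r => 'I_(nn i))).

Definition shift (x : V) (k : Idx nn) (t : R) : V :=
  fun l => x l + t * (l == k)%:R.

Lemma shift0 (x : V) k : shift x k 0 = x.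
Proof. by apply/funext => l; rewrite /shift mul0r addr0. Qed.

Lemma grad_is_derive (f : V -> R) (x : V) k (d : R) :
  is_derive (0 : R) 1 (fun t => f (shift x k t)) d -> grad f x k = d.
Proof. by move=> f_d; rewrite /grad derive1E; apply: derive_val. Qed.

Lemma is_derive_xcirc (x : V) k i :
  is_derive (0 : R) 1 (fun t => xcirc (shift x k t) i)
    (\sum_(j : 'I_(nn i) | val j == 0%N) (Tg j == k)%:R).
Proof. by apply: is_derive_big => j _; exact: is_derive_affine. Qed.

Lemma is_derive_xbullet2 (x : V) k i :
  is_derive (0 : R) 1 (fun t => xbullet2 (shift x k t) i)
    (\sum_(j : 'I_(nn i) | val j != 0%N) 2 * x (Tg j) * (Tg j == k)%:R).
Proof.
apply: is_derive_big => j _.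
apply: is_derive_eq (is_derive_sqr (is_derive_affine (x (Tg j)) _ 0)) _.
by rewrite mul0r addr0.
Qed.

Lemma grad_hcon_Tagged (x : V) i i' (j : 'I_(nn i')) :
  grad (hcon i) x (Tg j) = (i == i')%:R * (val j == 0%N)%:R.
Proof.
apply: grad_is_derive; apply: is_derive_eq (is_derive_xcirc _ _ _) _.
under eq_bigr do rewrite -[(_ == _)%:R]mul1r.
have [eq_ii'|neq_ii'] := eqVneq i i'.
  by subst i'; rewrite sum_Tagged_eq mulr1 mul1r.
by rewrite sum_Tagged_neq // mul0r.
Qed.

Lemma grad_gcon_Tagged (x : V) i i' (j : 'I_(nn i')) :
  grad (gcon i) x (Tg j) =
  (i == i')%:R * (if val j == 0%N then 2 * xcirc x i else - (2 * x (Tg j))).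
Proof.
apply: grad_is_derive.
apply: is_derive_eq
  (is_deriveB (is_derive_sqr (is_derive_xcirc _ _ _)) (is_derive_xbullet2 _ _ _)) _.
rewrite shift0; under eq_bigr do rewrite -[(_ == _)%:R]mul1r.
have [eq_ii'|neq_ii'] := eqVneq i i'.
  subst i'; rewrite !sum_Tagged_eq mul1r.
  by case: (val j == 0%N); rewrite /= ?mul1r ?mul0r ?mulr0 ?mulr1 ?subr0 ?add0r.
by rewrite !sum_Tagged_neq // mul0r mulr0 subr0.
Qed.

End Gradients.

Section Tensors.
Variables (R : realType) (r : nat) (nn : 'I_r -> nat) (m : nat).
Variable T : tensor R nn m.
Local Notation V := (vec R nn).
Local Notation multi_index := {ffun 'I_m -> Idx nn}.

Lemma is_derive_tens_m (x : V) k :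
  is_derive (0 : R) 1 (fun t => tens_m T (shift x k t))
    (\sum_(idx : multi_index) T idx *
       \sum_(j : 'I_m) (idx j == k)%:R * \prod_(l | l != j) x (idx l)).
Proof.
apply: is_derive_big => idx _; apply: is_derive_mull.
apply: is_derive_eq (is_derive_bigprod (index_enum_uniq _)
  (fun l => is_derive_affine (x (idx l)) ((idx l == k)%:R) 0)) _.
by apply: eq_bigr => j _; rewrite /shift; under eq_bigr do rewrite mul0r addr0.
Qed.

Lemma tens_m1E (z : 'I_m) (x : V) k : val z = 0%N ->
  tens_m1 T x k =
  \sum_(idx : multi_index) T idx * ((idx z == k)%:R * \prod_(l | l != z) x (idx l)).
Proof.
move=> z0; rewrite /tens_m1 big_mkcond /=; apply: eq_bigr => idx _.
have -> : [forall l : 'I_m, (val l == 0%N) ==> (idx l == k)] = (idx z == k).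
  apply/forallP/idP => [/(_ z)|idx_zk l]; first by rewrite z0 eqxx.
  apply/implyP => /eqP l0; rewrite (_ : l = z) //.
  by apply/val_inj; rewrite /= l0 z0.
rewrite (eq_bigl (fun l => l != z)); last by move=> l; rewrite -z0 (inj_eq val_inj).
by case: (idx z == k); rewrite ?mul1r ?mul0r ?mulr0.
Qed.

Lemma tens_m_euler (x : V) : (0 < m)%N -> inner x (tens_m1 T x) = tens_m T x.
Proof.
move=> m_gt0; pose z := Ordinal m_gt0.
rewrite /inner; under eq_bigr do rewrite (@tens_m1E z) // big_distrr /=.
rewrite exchange_big /tens_m; apply: eq_bigr => idx _.
rewrite (bigD1 (idx z)) //= eqxx [X in _ + X]big1 ?addr0; last first.
  by move=> k; rewrite eq_sym => /negbTE ->; rewrite mul0r !mulr0.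
by rewrite [X in _ = _ * X](bigD1 z) //= mul1r mulrCA.
Qed.

Hypothesis T_sym : symmetric_tensor T.

Lemma symmetric_partial_term (j z : 'I_m) (x : V) k :
  \sum_(idx : multi_index) T idx * ((idx j == k)%:R * \prod_(l | l != j) x (idx l)) =
  \sum_(idx : multi_index) T idx * ((idx z == k)%:R * \prod_(l | l != z) x (idx l)).
Proof.
pose s : 'S_m := tperm j z.
pose swap (idx : multi_index) := [ffun l => idx (s l)].
have swapK : involutive swap by move=> idx; apply/ffunP => l; rewrite !ffunE tpermK.
rewrite (reindex_inj (inv_inj swapK)) /=; apply: eq_bigr => idx _.
rewrite /swap T_sym ffunE tpermL; congr (_ * (_ * _)).
rewrite [RHS](reindex_inj (@perm_inj _ s)) /=.
apply: eq_big => l; last by rewrite ffunE.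
by rewrite -{1}(tpermL j z) (inj_eq (@perm_inj _ s)).
Qed.

Lemma is_derive_tens_m_sym (x : V) k : (0 < m)%N ->
  is_derive (0 : R) 1 (fun t => tens_m T (shift x k t)) (m%:R * tens_m1 T x k).
Proof.
move=> m_gt0; apply: is_derive_eq (is_derive_tens_m x k) _.
pose z := Ordinal m_gt0.
under eq_bigr do rewrite big_distrr /=.
rewrite exchange_big /=.
under eq_bigr do rewrite (symmetric_partial_term _ z) -(@tens_m1E z x k erefl).
by rewrite sumr_const card_ord mulr_natl.
Qed.

End Tensors.

Section KKTCombination.
Variables (R : realType) (r : nat) (nn : 'I_r -> nat).
Variables (beta gamma : 'I_r -> R) (delta : R).
Local Notation V := (vec R nn).
Local Notation Tg := (Tagged (fun i : 'I_r => 'I_(nn i))).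

Definition kkt_comb (x : V) : V := fun k =>
  \sum_i beta i * grad (gcon i) x k + \sum_i gamma i * grad (hcon i) x k
  + delta * evec R k.

Lemma kkt_comb_Tagged (x : V) i (j : 'I_(nn i)) :
  kkt_comb x (Tg j) =
  if val j == 0%N then 2 * beta i * xcirc x i + gamma i + delta
  else - (2 * beta i * x (Tg j)).
Proof.
have beta_part : \sum_i' beta i' * grad (gcon i') x (Tg j) =
    beta i * (if val j == 0%N then 2 * xcirc x i else - (2 * x (Tg j))).
  rewrite (bigD1 i) //= big1 ?addr0 => [|i' /negbTE neq];
    by rewrite grad_gcon_Tagged ?neq ?eqxx ?mul1r ?mul0r ?mulr0.
have gamma_part : \sum_i' gamma i' * grad (hcon i') x (Tg j) =
    gamma i * (val j == 0%N)%:R.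
  rewrite (bigD1 i) //= big1 ?addr0 => [|i' /negbTE neq];
    by rewrite grad_hcon_Tagged ?neq ?eqxx ?mul1r ?mul0r ?mulr0.
rewrite /kkt_comb beta_part gamma_part /evec /=.
by case: (val j == 0%N); rewrite /=; ring.
Qed.

Lemma inner_kkt_comb (x : V) :
  (forall i, beta i * gcon i x = 0) -> (forall i, gamma i * hcon i x = 0) ->
  inner x (kkt_comb x) = delta * inner (evec R (nn:=nn)) x.
Proof.
move=> beta_g gamma_h; rewrite inner_evec mulr_sumr /inner big_Idx.
apply: eq_bigr => i _; rewrite (bigID (fun j : 'I_(nn i) => val j == 0%N)) /=.
under eq_bigr => j j0 do rewrite kkt_comb_Tagged j0.
under [X in _ + X]eq_bigr => j j0 do rewrite kkt_comb_Tagged (negbTE j0).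
have bullet_part :
    \sum_(j : 'I_(nn i) | val j != 0%N) x (Tg j) * - (2 * beta i * x (Tg j)) =
    - (2 * beta i) * xbullet2 x i.
  by rewrite /xbullet2 mulr_sumr; apply: eq_bigr => j _; ring.
rewrite -big_distrl /= -/(xcirc x i) bullet_part.
transitivity (2 * (beta i * gcon i x) + gamma i * hcon i x + delta * xcirc x i).
  by rewrite /gcon /hcon; ring.
by rewrite beta_g gamma_h mulr0 !add0r.
Qed.

Lemma inK_kkt_comb (x : V) : (forall i, (0 < nn i)%N) ->
  (forall i, 0 <= beta i) -> (forall i, 0 <= gamma i) -> delta = 0 ->
  inK x -> inK (kkt_comb x).
Proof.
move=> nn_gt0 beta_ge0 gamma_ge0 delta0 Kx i.
rewrite (xcirc_head _ (nn_gt0 i)) kkt_comb_Tagged /= delta0 addr0.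
have -> : xbullet2 (kkt_comb x) i = (2 * beta i) ^+ 2 * xbullet2 x i.
  rewrite /xbullet2 mulr_sumr; apply: eq_bigr => j j0.
  by rewrite kkt_comb_Tagged (negbTE j0); ring.
have two_beta_ge0 : 0 <= 2 * beta i by rewrite mulr_ge0.
rewrite sqrtrM ?sqr_ge0 // sqrtr_sqr ger0_norm //.
apply: le_trans (ler_wpM2l two_beta_ge0 (Kx i)) _.
by rewrite lerDl.
Qed.

End KKTCombination.

Section EigenResidual.
Variables (R : realType) (r : nat) (nn : 'I_r -> nat) (m : nat).
Variables (A B : tensor R nn m).
Hypotheses (m_gt0 : (0 < m)%N) (A_sym : symmetric_tensor A).
Hypothesis B_sym : symmetric_tensor B.
Local Notation V := (vec R nn).

Definition eig_residual (x : V) : V :=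
  fun k => lam A B x * tens_m1 A x k - tens_m1 B x k.

Lemma inner_eig_residual (x : V) : tens_m A x != 0 -> inner x (eig_residual x) = 0.
Proof.
move=> Ax_neq0; have := tens_m_euler A x m_gt0; have := tens_m_euler B x m_gt0.
rewrite /inner /eig_residual => eulerB eulerA.
under eq_bigr do rewrite mulrBr mulrCA.
by rewrite sumrB -mulr_sumr eulerA eulerB /lam divfK ?subrr.
Qed.

Lemma grad_lam (x : V) k : tens_m A x != 0 ->
  grad (lam A B) x k = - (m%:R / tens_m A x) * eig_residual x k.
Proof.
move=> Ax_neq0; apply: grad_is_derive.
have dA := is_derive_tens_m_sym A_sym x k m_gt0.
have dB := is_derive_tens_m_sym B_sym x k m_gt0.
rewrite (_ : (fun _ => _) = (fun t => tens_m B (shift x k t)) *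
                           (fun t => (tens_m A (shift x k t))^-1)); last first.
  by apply/funext.
apply: is_derive_eq (is_deriveM dB (is_deriveV _ dA)) _; first by rewrite /= shift0.
rewrite /= !shift0 !scalerRE /eig_residual /lam.
by field.
Qed.

Lemma eig_residual_kkt (beta gamma : 'I_r -> R) (delta : R) (x : V) :
  tens_m A x != 0 ->
  (forall k, grad (lam A B) x k + kkt_comb beta gamma delta x k = 0) ->
  eig_residual x = fun k => tens_m A x / m%:R * kkt_comb beta gamma delta x k.
Proof.
move=> Ax_neq0 kkt; apply/funext => k; move/eqP: (kkt k).
rewrite grad_lam // mulNr addrC subr_eq0 => /eqP ->.
have m_neq0 : m%:R != 0 :> R by rewrite pnatr_eq0 -lt0n.
by field; rewrite Ax_neq0 m_neq0.
Qed.

End EigenResidual.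

Theorem theorem2 (R : realType) (r : nat) (nn : 'I_r -> nat) (m : nat)
  (A B : tensor R nn m) (xb : vec R nn) :
  (0 < m)%N ->
  (forall i, (0 < nn i)%N) ->
  symmetric_tensor A -> symmetric_tensor B ->
  strictly_K_positive A ->
  stationary A B xb ->
  let wb : vec R nn := fun k => lam A B xb * tens_m1 A xb k - tens_m1 B xb k in
  xb <> (fun _ => 0) /\ inK xb /\ inK wb /\ inner xb wb = 0.
Proof.
move=> m_gt0 nn_gt0 A_sym B_sym A_pos [[g_ge0 [h_ge0 ex1]]].
move=> [beta [gamma [delta [beta_ge0 [gamma_ge0 [kkt [beta_g gamma_h]]]]]]].
rewrite -/(eig_residual A B xb) /=.
have Kxb := inK_gcon_hcon g_ge0 h_ge0.
have Axb_gt0 : 0 < tens_m A xb := A_pos xb Kxb (inner_eq1_neq0 ex1).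
have c_gt0 : 0 < tens_m A xb / m%:R by rewrite divr_gt0 // ltr0n.
have kkt_eq : forall k, grad (lam A B) xb k + kkt_comb beta gamma delta xb k = 0.
  by move=> k; rewrite /kkt_comb !addrA kkt.
have w_kkt := eig_residual_kkt m_gt0 A_sym B_sym (lt0r_neq0 Axb_gt0) kkt_eq.
have inner_w0 := inner_eig_residual B m_gt0 (lt0r_neq0 Axb_gt0).
have delta0 : delta = 0.
  move: inner_w0; rewrite w_kkt inner_scale inner_kkt_comb // ex1 mulr1 => /eqP.
  by rewrite mulf_eq0 (gt_eqF c_gt0) => /eqP.
subst delta; split; first exact: inner_eq1_neq0 ex1.
split=> //; split=> //; rewrite w_kkt.
exact: inK_scale (ltW c_gt0) (inK_kkt_comb nn_gt0 beta_ge0 gamma_ge0 erefl Kxb).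
Qed.
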